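(* Let $R$ be a finite commutative local Frobenius ring with residue field $\mathbb{F}_q$ and $|R|=q^\omega$, and let $\ell$ be a nonnegative integer. For $i=1,2$, let $C_i$ be a linear code of length $n$ over $R$ with generator matrix $\mathrm{G}_i$ and parity check matrix $\mathrm{H}_i$, and suppose $C_1+C_2=R^n$. Then $\{C_1,C_2\}$ is an $\ell$-DLIP if and only if $\texttt{Rank}_q(\mathrm{H}_2\mathrm{G}_1^\top)=\texttt{Rank}_q(\mathrm{G}_1)-\ell=n\omega-\texttt{Rank}_q(\mathrm{G}_2)$ or $\texttt{Rank}_q(\mathrm{H}_1\mathrm{G}_2^\top)=\texttt{Rank}_q(\mathrm{G}_2)-\ell=n\omega-\texttt{Rank}_q(\mathrm{G}_1)$.
   Context: A linear code of length $n$ over $R$ is an $R$-submodule of $R^n$; $\dim(C):=\log_q|C|$. A pair $\{C,D\}$ is an $\ell$-DLIP if $\dim(C\cap D)=\ell$. A generator matrix of $C$ is a matrix whose rows generate $C$; a parity check matrix is a generator matrix of $C^\perp$ with respect to the standard inner product $\sum_j u_jc_j$. For a matrix $\mathrm{A}$ over $R$, $\texttt{Rank}_q(\mathrm{A}):=\log_q|M|$ where $M$ is the $R$-submodule spanned by the rows of $\mathrm{A}$. *)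

From Stdlib Require Import Reals.
From mathcomp Require Import all_boot all_algebra.

Set Implicit Arguments.
Unset Strict Implicit.
Unset Printing Implicit Defensive.

Import GRing.Theory.
Delimit Scope ring_scope with ring.

Section Defs.
Variable Rg : finComNzRingType.

Definition is_ideal (I : {set Rg}) : Prop :=
  [/\ (0%R : Rg) \in I,
      forall x y, x \in I -> y \in I -> (x + y)%R \in I
    & forall r x, x \in I -> (r * x)%R \in I].

Definition maximal_ideal (M : {set Rg}) : Prop :=
  [/\ is_ideal M, (1%R : Rg) \notin M &
      forall J : {set Rg}, is_ideal J -> M \subset J -> J = M \/ J = setT].

Definition local_ring_with (M : {set Rg}) : Prop :=
  maximal_ideal M /\ forall M', maximal_ideal M' -> M' = M.

Definition minimal_ideal (I : {set Rg}) : Prop :=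
  [/\ is_ideal I, I != [set 0%R] &
      forall J : {set Rg}, is_ideal J -> J \subset I -> J = [set 0%R] \/ J = I].

(** A finite commutative LOCAL ring is Frobenius iff its socle
    (sum of minimal ideals) is isomorphic to the residue field R/m, i.e.
    iff it has a unique minimal (nonzero) ideal. *)
Definition local_frobenius : Prop :=
  exists I, minimal_ideal I /\ forall J, minimal_ideal J -> J = I.

(** Cardinality of the residue field R/M (index of the additive subgroup M). *)
Definition residue_card (M : {set Rg}) : nat := #|Rg| %/ #|M|.

Variable n : nat.

Definition linear_code (C : {set 'rV[Rg]_n}) : Prop :=
  [/\ (0%R : 'rV[Rg]_n) \in C,
      forall x y, x \in C -> y \in C -> (x + y)%R \in C
    & forall (r : Rg) x, x \in C -> (r *: x)%R \in C].

Definition inner (u c : 'rV[Rg]_n) : Rg :=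
  (\sum_(j < n) u ord0 j * c ord0 j)%ring.

Definition dual_code (C : {set 'rV[Rg]_n}) : {set 'rV[Rg]_n} :=
  [set u | [forall c in C, inner u c == 0%R]].

Definition rowspan k (A : 'M[Rg]_(k, n)) : {set 'rV[Rg]_n} :=
  [set (u *m A)%R | u : 'rV[Rg]_k].

Definition code_sum (C D : {set 'rV[Rg]_n}) : {set 'rV[Rg]_n} :=
  [set (x + y)%R | x in C, y in D].

Definition is_generator_matrix k (G : 'M[Rg]_(k, n)) (C : {set 'rV[Rg]_n}) :=
  rowspan G = C.

Definition is_parity_check_matrix k (H : 'M[Rg]_(k, n)) (C : {set 'rV[Rg]_n}) :=
  rowspan H = dual_code C.

Definition dimq (q : nat) (M : {set 'rV[Rg]_n}) : R :=
  Rdiv (ln (INR #|M|)) (ln (INR q)).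

End Defs.

Definition Rankq (Rg : finComNzRingType) (q : nat) k m (A : 'M[Rg]_(k, m)) : R :=
  dimq q (rowspan A).

Definition DLIP (Rg : finComNzRingType) (n q l : nat) (C D : {set 'rV[Rg]_n}) : Prop :=
  dimq q (C :&: D) = INR l.

From HB Require Import structures.
From Stdlib Require Import Reals Classical Lra.
From mathcomp Require Import all_boot all_algebra.

Set Implicit Arguments.
Unset Strict Implicit.
Unset Printing Implicit Defensive.
Import GRing.Theory.

(* Over a finite local Frobenius ring R with maximal ideal m, every linear code satisfies
   |C| |C^perp| = |R|^n.  The inequality <= goes by induction on the size of R^n \ C: pick
   x outside C with |C + Rx| minimal, so that (C : x) = m; adjoining x multiplies |C| by
   |R/m| and divides |C^perp| by at most |ann m| <= |R/m|, because the socle is simple.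
   Equality follows by applying the inequality to the row spaces of a generator matrix G
   and of G^T, as |rowspan G^T| |C^perp| = |R|^n (image and kernel of d |-> d G^T).
   When C1 + C2 = R^n the duals meet trivially, so d |-> d G1^T is injective on
   C2^perp = rowspan H2 and Rank_q (H2 G1^T) = dim C2^perp = n omega - dim C2.  Together
   with dim C1 + dim C2 = n omega + dim (C1 :&: C2), both alternatives of the statement
   reduce to dim (C1 :&: C2) = l. *)

(* The library declares [T * U] a finType and a zmodType, but not their join. *)
HB.instance Definition _ (T U : finZmodType) := GRing.Zmodule.on (T * U)%type.

Section Counting.
Local Open Scope ring_scope.

Lemma card_uniform_fibers (T U : finType) (f : T -> U) (X : {set T}) k :
  {in X, forall x, #|[set y in X | f y == f x]| = k} ->
  #|X| = (#|f @: X| * k)%N.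
Proof.
move=> fibk; rewrite -sum1_card (partition_big_imset f) -sum_nat_const.
apply: eq_bigr => _ /imsetP [x Xx ->]; rewrite -(fibk x Xx) -sum1_card.
by apply: eq_bigl => y; rewrite inE.
Qed.

Lemma card_additive_fibers (T U : finZmodType) (f : T -> U) (X : {set T}) :
  {morph f : a b / a - b} -> 0 \in X -> {in X &, forall a b, a - b \in X} ->
  #|X| = (#|f @: X| * #|[set x in X | f x == 0%R]|)%N.
Proof.
move=> fB X0 XB; apply: card_uniform_fibers => x Xx.
have f0 : f 0 = 0 by rewrite -(subrr 0) fB subrr.
have fN b : f (- b) = - f b by rewrite -sub0r fB f0 sub0r.
have fD a b : f (a + b) = f a + f b by rewrite -{1}[b]opprK fB fN opprK.
rewrite -[RHS](card_imset _ (addrI x)); congr #|pred_of_set _|; apply/setP => y.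
apply/idP/imsetP => [|[z]].
- rewrite inE => /andP [Xy /eqP fyx]; exists (y - x); last by rewrite addrC subrK.
  by rewrite inE XB // fB fyx subrr eqxx.
- rewrite inE => /andP [Xz /eqP fz0] ->.
  have XNz : - z \in X by rewrite -sub0r XB.
  by rewrite inE fD fz0 addr0 eqxx andbT -[z]opprK XB.
Qed.

End Counting.

Section LocalRing.
Local Open Scope ring_scope.
Variable Rg : finComNzRingType.
Implicit Types (I J K : {set Rg}) (a r : Rg).

Lemma ideal_setT I : is_ideal I -> 1 \in I -> I = setT.
Proof. by case=> _ _ IM I1; apply/setP => r; rewrite inE -[r]mulr1 IM. Qed.

Lemma proper_ideal_sub_maximal J :
  is_ideal J -> 1 \notin J -> exists2 K, maximal_ideal K & J \subset K.
Proof.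
have [k] := ubnP #|~: J|; elim: k J => // k IHk J ltJk idJ J1.
have [maxJ | nmaxJ] := classic (maximal_ideal J); first by exists J.
have [K [idK JK KJ K1]] : exists K, [/\ is_ideal K, J \subset K, K != J & 1 \notin K].
  apply: NNPP => noK; apply: nmaxJ; split => // K idK JK.
  have [-> | KJ] := eqVneq K J; [by left | right].
  by apply: ideal_setT => //; apply: contraT => K1; case: noK; exists K.
have properJK : J \proper K by rewrite properEneq eq_sym KJ.
have ltKk : (#|~: K| < k)%N by rewrite -ltnS (leq_trans _ ltJk) // ltnS proper_card // properC.
have [L maxL KL] := IHk K ltKk idK K1.
by exists L; last exact: subset_trans JK KL.
Qed.

Definition principal a : {set Rg} := [set r * a | r : Rg].

Lemma principal_ideal a : is_ideal (principal a).
Proof.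
split.
- by apply/imsetP; exists 0; rewrite ?mul0r.
- move=> _ _ /imsetP [u _ ->] /imsetP [v _ ->].
  by apply/imsetP; exists (u + v); rewrite ?mulrDl.
- by move=> s _ /imsetP [u _ ->]; apply/imsetP; exists (s * u); rewrite ?mulrA.
Qed.

Lemma mem_principal a : a \in principal a.
Proof. by apply/imsetP; exists 1; rewrite ?mul1r. Qed.

Definition ann I : {set Rg} := [set a | [forall m in I, m * a == 0]].

Lemma annP I a : reflect {in I, forall m, m * a = 0} (a \in ann I).
Proof. by rewrite inE; apply: (iffP forall_inP) => annIa m /annIa /eqP. Qed.

Variable M : {set Rg}.
Hypothesis locM : local_ring_with M.

Lemma ideal_max : is_ideal M.
Proof. by case: locM => -[]. Qed.

Lemma one_notin_max : 1 \notin M.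
Proof. by case: locM => -[]. Qed.

Lemma one_sub_notin_max m : m \in M -> 1 - m \notin M.
Proof.
move=> Mm; apply: contra one_notin_max => Mm1.
by have [_ MD _] := ideal_max; rewrite -(subrK m 1) MD.
Qed.

Lemma proper_ideal_sub_max J : is_ideal J -> 1 \notin J -> J \subset M.
Proof.
move=> idJ J1; have [K maxK JK] := proper_ideal_sub_maximal idJ J1.
by rewrite -(proj2 locM K maxK).
Qed.

Lemma ideal_sup_max_eq K : is_ideal K -> M \subset K -> 1 \notin K -> K = M.
Proof.
case: locM => -[_ _ maxM] _ idK MK K1.
by case: (maxM K idK MK) => // KT; rewrite KT inE in K1.
Qed.

Lemma notin_max_unit r : r \notin M -> exists v, v * r = 1.
Proof.
move=> rM; case: (boolP (1 \in principal r)) => [/imsetP [v _ ->] | pr1]; first by exists v.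
by move: rM; rewrite (subsetP (proper_ideal_sub_max (principal_ideal r) pr1)) ?mem_principal.
Qed.

Lemma card_principal_ann a :
  a \in ann M -> a != 0 -> (#|principal a| * #|M|)%N = #|Rg|.
Proof.
move=> /annP Ma a0.
have kerM : [set r | r * a == 0] = M.
  apply: ideal_sup_max_eq; last by rewrite inE mul1r.
  - split; first by rewrite inE mul0r.
    + by move=> x y; rewrite !inE mulrDl => /eqP-> /eqP->; rewrite addr0.
    + by move=> r x; rewrite !inE -mulrA => /eqP->; rewrite mulr0.
  - by apply/subsetP => m Mm; rewrite inE Ma.
have := card_additive_fibers (fun x y => mulrBl a x y) (in_setT 0)
  (fun x y _ _ => in_setT (x - y)).
rewrite cardsT => ->; congr (_ * _)%N.
  by apply: eq_card => r; apply/imsetP/imsetP => -[u _ ->]; exists u.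
by rewrite -kerM; apply: eq_card => r; rewrite !inE.
Qed.

Hypothesis frobR : local_frobenius Rg.

Lemma principal_ann_minimal a : a \in ann M -> a != 0 -> minimal_ideal (principal a).
Proof.
move=> /annP Ma a0; split; first exact: principal_ideal.
  by apply: contra_neq a0 => pa0; apply/set1P; rewrite -pa0 mem_principal.
move=> J idJ Ja; have [J0 | [b /setD1P [b0 Jb]]] := set_0Vmem (J :\ 0).
  by left; apply/eqP; rewrite eqEsubset -setD_eq0 J0 eqxx sub1set; case: idJ.
right; apply/eqP; rewrite eqEsubset Ja /=.
have /imsetP [r _ bE] := subsetP Ja b Jb.
have [v vr1] : exists v, v * r = 1.
  by apply: notin_max_unit; apply: contra b0 => Mr; rewrite bE Ma.
apply/subsetP => _ /imsetP [u _ ->].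
by rewrite -[a]mul1r -vr1 -mulrA -bE mulrA; case: idJ => _ _; apply.
Qed.

Lemma leq_card_ann_max : (#|ann M| * #|M| <= #|Rg|)%N.
Proof.
have [annM0 | [a /setD1P [a0 Ma]]] := set_0Vmem (ann M :\ 0).
  have annM1 : (#|ann M| <= 1)%N.
    by rewrite -(cards1 (0 : Rg)) subset_leq_card // -setD_eq0 annM0.
  by rewrite -[#|Rg|]mul1n leq_mul // max_card.
rewrite -(card_principal_ann Ma a0) leq_mul2r subset_leq_card ?orbT //.
apply/subsetP => b Mb; have [-> | b0] := eqVneq b 0; first by case: (principal_ideal a).
have [S [_ uniqS]] := frobR.
rewrite (uniqS _ (principal_ann_minimal Ma a0)).
by rewrite -(uniqS _ (principal_ann_minimal Mb b0)) mem_principal.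
Qed.

End LocalRing.

Section Codes.
Local Open Scope ring_scope.
Variables (Rg : finComNzRingType) (n : nat).
Implicit Types (C D : {set 'rV[Rg]_n}) (u v x c d : 'rV[Rg]_n).

Lemma innerE u c : inner u c = (u *m c^T) 0 0.
Proof. by rewrite /inner mxE; apply: eq_bigr => j _; rewrite mxE. Qed.

Lemma innerDr u x c : inner u (x + c) = inner u x + inner u c.
Proof. by rewrite /inner -big_split; apply: eq_bigr => j _; rewrite mxE mulrDr. Qed.

Lemma innerZr u r c : inner u (r *: c) = r * inner u c.
Proof. by rewrite /inner mulr_sumr; apply: eq_bigr => j _; rewrite mxE mulrCA. Qed.

Lemma innerBl u v c : inner (u - v) c = inner u c - inner v c.
Proof. by rewrite /inner -sumrB; apply: eq_bigr => j _; rewrite !mxE mulrBl. Qed.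

Lemma inner_delta_mx d j : inner d (delta_mx 0 j) = d 0 j.
Proof.
rewrite /inner (bigD1 j) //= big1 ?addr0 => [|i /negbTE ij].
  by rewrite mxE !eqxx mulr1.
by rewrite mxE ij andbF mulr0.
Qed.

Lemma inner_nondegenerate d : (forall c, inner d c = 0) -> d = 0.
Proof. by move=> d0; apply/rowP => j; rewrite mxE -inner_delta_mx d0. Qed.

Lemma dual_codeP C d : reflect {in C, forall c, inner d c = 0} (d \in dual_code C).
Proof. by rewrite inE; apply: (iffP forall_inP) => Cd c /Cd /eqP. Qed.

Lemma dual_code0 C : 0 \in dual_code C.
Proof. by apply/dual_codeP => c _; rewrite -(subrr 0) innerBl subrr. Qed.

Lemma dual_codeB C : {in dual_code C &, forall u v, u - v \in dual_code C}.
Proof.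
move=> u v /dual_codeP Cu /dual_codeP Cv; apply/dual_codeP => c Cc.
by rewrite innerBl Cu // Cv // subrr.
Qed.

Lemma dual_codeT : dual_code [set: 'rV[Rg]_n] = [set 0].
Proof.
apply/setP => d; rewrite [d \in [set 0]]inE.
apply/idP/eqP => [/dual_codeP Td | ->]; last exact: dual_code0.
by apply: inner_nondegenerate => c; rewrite Td ?inE.
Qed.

Lemma linear_codeN C : linear_code C -> {in C, forall u, - u \in C}.
Proof. by case=> _ _ CZ u Cu; rewrite -scaleN1r CZ. Qed.

Lemma linear_codeB C : linear_code C -> {in C &, forall u v, u - v \in C}.
Proof. by move=> linC u v Cu Cv; have [_ CD _] := linC; rewrite CD ?(linear_codeN linC). Qed.

Lemma card_code_sum C D : linear_code C -> linear_code D ->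
  (#|C| * #|D| = #|code_sum C D| * #|C :&: D|)%N.
Proof.
move=> linC linD; have [C0 _ _] := linC; have [D0 _ _] := linD.
pose f (p : 'rV[Rg]_n * 'rV[Rg]_n) := p.1 + p.2.
have fB : {morph f : p q / p - q} by move=> [x y] [u v]; rewrite /f /= opprD addrACA.
rewrite -cardsX; set X := setX C D.
have X0 : 0 \in X by rewrite !inE /= C0.
have XB : {in X &, forall p q, p - q \in X}.
  by move=> [x y] [u v]; rewrite !inE /= => /andP [Cx Dy] /andP [Cu Dv]; rewrite !linear_codeB.
rewrite (card_additive_fibers fB X0 XB); congr (_ * _)%N.
  apply: eq_card => z; apply/imsetP/imset2P => [[[x y] Xxy ->] | [x y Cx Dy ->]].
    by move: Xxy; rewrite !inE => /andP [Cx Dy]; exists x y.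
  by exists (x, y); rewrite ?inE ?Cx.
have g_inj : injective (fun z : 'rV[Rg]_n => (z, - z)) by move=> z w [].
rewrite -(card_imset _ g_inj); apply: eq_card => -[x y].
apply/idP/imsetP => [| [z CDz [-> ->]]]; last first.
  by move: CDz; rewrite !inE /f /= addrN eqxx andbT => /andP [Cz Dz]; rewrite Cz linear_codeN.
rewrite !inE /f /= addr_eq0 => /andP [/andP [Cx Dy] /eqP xE].
exists x; last by rewrite xE opprK.
by rewrite inE Cx xE linear_codeN.
Qed.

Lemma dual_code_sum_setT C D :
  code_sum C D = setT -> dual_code C :&: dual_code D = [set 0].
Proof.
move=> CDT; apply/setP => d; rewrite in_setI in_set1.
apply/andP/eqP => [[/dual_codeP Cd /dual_codeP Dd] | ->]; last by rewrite !dual_code0.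
apply: inner_nondegenerate => c.
have /imset2P [x y Cx Dy ->] : c \in code_sum C D by rewrite CDT inE.
by rewrite innerDr Cd ?Dd ?addr0.
Qed.

Definition span C x : {set 'rV[Rg]_n} := [set r *: x + c | r in [set: Rg], c in C].

Definition colon C x : {set Rg} := [set r | r *: x \in C].

Lemma span_linear C x : linear_code C -> linear_code (span C x).
Proof.
case=> C0 CD CZ; split.
- by apply/imset2P; exists 0 0; rewrite ?inE ?scale0r ?addr0.
- move=> _ _ /imset2P [r c _ Cc ->] /imset2P [s e _ Ce ->].
  by apply/imset2P; exists (r + s) (c + e); rewrite ?inE ?CD // scalerDl addrACA.
- move=> s _ /imset2P [r c _ Cc ->].
  by apply/imset2P; exists (s * r) (s *: c); rewrite ?inE ?CZ // scalerDr scalerA.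
Qed.

Lemma sub_span C x : C \subset span C x.
Proof.
by apply/subsetP => c Cc; apply/imset2P; exists 0 c; rewrite ?inE ?scale0r ?add0r.
Qed.

Lemma mem_span C x : linear_code C -> x \in span C x.
Proof. by case=> C0 _ _; apply/imset2P; exists 1 0; rewrite ?inE ?scale1r ?addr0. Qed.

Lemma span_scale_sub C x r : span C (r *: x) \subset span C x.
Proof.
apply/subsetP => _ /imset2P [s c _ Cc ->].
by apply/imset2P; exists (s * r) c; rewrite ?inE ?scalerA.
Qed.

Lemma colon_ideal C x : linear_code C -> is_ideal (colon C x).
Proof.
case=> C0 CD CZ; split; first by rewrite inE scale0r.
- by move=> r s; rewrite !inE scalerDl; apply: CD.
- by move=> r s; rewrite !inE -scalerA; apply: CZ.
Qed.

Lemma card_span_colon C x :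
  linear_code C -> (#|span C x| * #|colon C x| = #|Rg| * #|C|)%N.
Proof.
move=> linC; have [C0 _ _] := linC.
pose f (p : Rg * 'rV[Rg]_n) := p.1 *: x + p.2.
have fB : {morph f : p q / p - q}.
  by move=> [r c] [s e]; rewrite /f /= scalerBl opprD addrACA.
have -> : (#|Rg| * #|C|)%N = #|setX [set: Rg] C| by rewrite cardsX cardsT.
set X := setX _ C.
have X0 : 0 \in X by rewrite !inE /= C0.
have XB : {in X &, forall p q, p - q \in X}.
  by move=> [r c] [s e]; rewrite !inE /= => Cc Ce; rewrite linear_codeB.
rewrite (card_additive_fibers fB X0 XB); congr (_ * _)%N.
  apply: eq_card => y; apply/imset2P/imsetP => [[r c _ Cc ->] | [[r c] Xrc ->]].
    by exists (r, c); rewrite ?inE.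
  by move: Xrc; rewrite !inE /= => Cc; exists r c; rewrite ?inE.
have g_inj : injective (fun r : Rg => (r, - (r *: x))) by move=> r s [].
rewrite -(card_imset _ g_inj); apply: eq_card => -[r c].
apply/imsetP/idP => [[s Cs [-> ->]] | ].
  by move: Cs; rewrite !inE /f /= addrN eqxx andbT => /(linear_codeN linC).
rewrite !inE /f /= addr_eq0 => /andP [Cc /eqP rxE]; exists r; last by rewrite rxE opprK.
by rewrite inE rxE linear_codeN.
Qed.

Lemma leq_card_dual_span C x :
  (#|dual_code C| <= #|dual_code (span C x)| * #|ann (colon C x)|)%N.
Proof.
have fB : {morph (fun d => inner d x) : u v / u - v} by move=> u v; rewrite innerBl.
rewrite (card_additive_fibers fB (dual_code0 C) (@dual_codeB C)) mulnC.
apply: leq_mul; apply: subset_leq_card; apply/subsetP.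
- move=> d; rewrite inE => /andP [/dual_codeP Cd /eqP dx0].
  by apply/dual_codeP => _ /imset2P [r c _ Cc ->]; rewrite innerDr innerZr dx0 mulr0 add0r Cd.
- move=> _ /imsetP [d /dual_codeP Cd ->]; apply/annP => r; rewrite inE => Crx.
  by rewrite -innerZr Cd.
Qed.

End Codes.

Section CodesOverLocalRing.
Local Open Scope ring_scope.
Variables (Rg : finComNzRingType) (M : {set Rg}) (n : nat).
Hypothesis locM : local_ring_with M.
Implicit Types (C : {set 'rV[Rg]_n}).

Lemma exists_colon_max C :
  linear_code C -> C != setT -> exists2 x, x \notin C & colon C x = M.
Proof.
move=> linC CT; have [_ _ CZ] := linC.
have /subsetPn [x0 _ Cx0] : ~~ ([set: 'rV[Rg]_n] \subset C) by rewrite subTset.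
have [x Cx minx] := @arg_minnP _ x0 (fun y => y \notin C) (fun y => #|span C y|) Cx0.
exists x => //; apply: ideal_sup_max_eq => //; last by rewrite inE scale1r.
  exact: colon_ideal.
apply/subsetP => m Mm; rewrite inE; apply: contraT => Cmx.
(* By minimality [span C (m *: x) = span C x], so [(1 - r m) *: x \in C] for some r,
   and [1 - r m] is a unit. *)
have spanE : span C (m *: x) = span C x.
  by apply/eqP; rewrite eqEcard span_scale_sub minx.
have /imset2P [r c _ Cc xE] : x \in span C (m *: x) by rewrite spanE mem_span.
have Mrm : r * m \in M by have [_ _ MZ] := ideal_max locM; apply: MZ.
have [v vE] := notin_max_unit locM (one_sub_notin_max locM Mrm).
have cE : (1 - r * m) *: x = c by rewrite scalerBl scale1r -scalerA {1}xE addrAC subrr add0r.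
by case/negP: Cx; rewrite -[x]scale1r -vE -scalerA cE CZ.
Qed.

Hypothesis frobR : local_frobenius Rg.

Lemma leq_card_code_mul_dual C :
  linear_code C -> (#|C| * #|dual_code C| <= #|Rg| ^ n)%N.
Proof.
have [k] := ubnP #|~: C|; elim: k C => // k IHk C ltCk linC.
have [-> | CT] := eqVneq C setT.
  by rewrite dual_codeT cards1 muln1 cardsT card_mx mul1n.
have [x Cx colM] := exists_colon_max linC CT.
have ltDk : (#|~: span C x| < k)%N.
  rewrite -ltnS (leq_trans _ ltCk) // ltnS proper_card // properC properE sub_span /=.
  by apply/subsetPn; exists x; first exact: mem_span.
have cardD := card_span_colon x linC; rewrite colM in cardD.
have cardCd := leq_card_dual_span C x; rewrite colM in cardCd.
have cardA := leq_card_ann_max locM frobR.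
have cardDd := IHk _ ltDk (span_linear x linC).
have R_gt0 : (0 < #|Rg|)%N by apply/card_gt0P; exists 0.
(* With D = span C x:
   |R| |C| |C^perp| = |D| |m| |C^perp| <= |D| |m| |D^perp| |ann m| <= |D| |D^perp| |R|. *)
rewrite -(leq_pmul2l R_gt0) mulnA -cardD -mulnA.
apply: leq_trans (leq_mul (leqnn _) (leq_mul (leqnn _) cardCd)) _.
by rewrite [(#|M| * _)%N]mulnCA mulnA [(#|M| * _)%N]mulnC [(#|Rg| * _)%N]mulnC leq_mul.
Qed.

End CodesOverLocalRing.

Section RowSpan.
Local Open Scope ring_scope.
Variable Rg : finComNzRingType.

Lemma rowspan_linear n k (A : 'M[Rg]_(k, n)) : linear_code (rowspan A).
Proof.
split.
- by apply/imsetP; exists 0; rewrite ?mul0mx.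
- move=> _ _ /imsetP [u _ ->] /imsetP [v _ ->].
  by apply/imsetP; exists (u + v); rewrite ?mulmxDl.
- by move=> r _ /imsetP [u _ ->]; apply/imsetP; exists (r *: u); rewrite ?scalemxAl.
Qed.

Lemma dual_rowspan n k (G : 'M[Rg]_(k, n)) :
  dual_code (rowspan G) = [set d | d *m G^T == 0].
Proof.
apply/setP => d; rewrite [in RHS]inE; apply/dual_codeP/eqP => [Gd | dG0 _ /imsetP [u _ ->]].
  apply/rowP => i; rewrite [RHS]mxE -(Gd (delta_mx 0 i *m G)).
    by rewrite innerE trmx_mul trmx_delta mulmxA -colE [RHS]mxE.
  by apply/imsetP; exists (delta_mx 0 i).
by rewrite innerE trmx_mul mulmxA dG0 mul0mx mxE.
Qed.

Lemma card_rowspan_tr_mul_dual n k (G : 'M[Rg]_(k, n)) :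
  (#|rowspan G^T| * #|dual_code (rowspan G)| = #|Rg| ^ n)%N.
Proof.
have := @card_additive_fibers _ _ (mulmxr G^T) [set: 'rV[Rg]_n]
  (fun u v => mulmxBl u v G^T) (in_setT 0) (fun u v _ _ => in_setT (u - v)).
rewrite cardsT card_mx mul1n => ->; rewrite dual_rowspan.
congr (_ * _)%N; apply: eq_card => d; last by rewrite !inE.
by apply/imsetP/imsetP => -[u _ ->]; exists u.
Qed.

Lemma card_rowspan_mul_tr n k r (G : 'M[Rg]_(k, n)) (H : 'M[Rg]_(r, n)) D :
  rowspan H = dual_code D -> dual_code (rowspan G) :&: dual_code D = [set 0] ->
  #|rowspan (H *m G^T)| = #|dual_code D|.
Proof.
move=> HD trivGD.
have -> : rowspan (H *m G^T) = (fun d => d *m G^T) @: dual_code D.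
  by rewrite -HD -imset_comp; apply: eq_imset => u /=; rewrite mulmxA.
apply: card_in_imset => u v Du Dv /= uvG; apply/eqP; rewrite -subr_eq0 -in_set1 -trivGD.
by rewrite in_setI dual_rowspan inE mulmxBl uvG subrr eqxx dual_codeB.
Qed.

End RowSpan.

Section RowSpanOverLocalRing.
Local Open Scope ring_scope.
Variables (Rg : finComNzRingType) (M : {set Rg}).
Hypotheses (locM : local_ring_with M) (frobR : local_frobenius Rg).

Lemma card_rowspan_tr n k (G : 'M[Rg]_(k, n)) : #|rowspan G^T| = #|rowspan G|.
Proof.
have dual_gt0 m (C : {set 'rV[Rg]_m}) : (0 < #|dual_code C|)%N.
  by apply/card_gt0P; exists 0; apply: dual_code0.
have le_card_tr m l (A : 'M[Rg]_(l, m)) : (#|rowspan A| <= #|rowspan A^T|)%N.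
  rewrite -(leq_pmul2r (dual_gt0 _ (rowspan A))) card_rowspan_tr_mul_dual.
  by apply: (leq_card_code_mul_dual locM frobR); apply: rowspan_linear.
by apply/eqP; rewrite eqn_leq le_card_tr andbT -{2}(trmxK G) le_card_tr.
Qed.

Lemma card_rowspan_mul_dual n k (G : 'M[Rg]_(k, n)) :
  (#|rowspan G| * #|dual_code (rowspan G)| = #|Rg| ^ n)%N.
Proof. by rewrite -card_rowspan_tr card_rowspan_tr_mul_dual. Qed.

End RowSpanOverLocalRing.

Section Logarithms.
Local Open Scope R_scope.

Definition logq (q a : nat) : R := ln (INR a) / ln (INR q).

Lemma dimqE (Rg : finComNzRingType) n q (X : {set 'rV[Rg]_n}) : dimq q X = logq q #|X|.
Proof. by []. Qed.

Lemma logqM q a b : (0 < a)%N -> (0 < b)%N -> logq q (a * b) = logq q a + logq q b.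
Proof.
move=> /ltP a_gt0 /ltP b_gt0; rewrite /logq mult_INR ln_mult; try exact: lt_0_INR.
by rewrite Rdiv_plus_distr.
Qed.

Lemma INR_expn a k : INR (a ^ k)%N = INR a ^ k.
Proof. by elim: k => [|k IHk]; rewrite ?expn0 // expnS mult_INR IHk. Qed.

Lemma logqX q k : (1 < q)%N -> logq q (q ^ k)%N = INR k.
Proof.
move=> q_gt1; rewrite /logq INR_expn ln_pow; last exact/lt_0_INR/ltP/ltnW.
field; apply: Rgt_not_eq; rewrite -ln_1; apply: ln_increasing; [lra | exact/lt_1_INR/ltP].
Qed.

Lemma dlip_rank_iff (N dI d1 d2 e1 e2 l : R) :
  d1 + d2 = N + dI -> d1 + e1 = N -> d2 + e2 = N ->
  (dI = l <-> ((e2 = d1 - l /\ d1 - l = N - d2) \/ (e1 = d2 - l /\ d2 - l = N - d1))).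
Proof. by move=> d12 de1 de2; split => [dIl | [[]|[]]]; [left; split | ..]; lra. Qed.

End Logarithms.

Theorem corollary3p12
  (Rg : finComNzRingType) (M : {set Rg}) (q omega l n : nat)
  (hloc : local_ring_with M) (hfrob : local_frobenius Rg)
  (hq : residue_card M = q) (hcard : #|Rg| = q ^ omega)
  (C1 C2 : {set 'rV[Rg]_n}) (hC1 : linear_code C1) (hC2 : linear_code C2)
  (k1 k2 r1 r2 : nat)
  (G1 : 'M[Rg]_(k1, n)) (G2 : 'M[Rg]_(k2, n))
  (H1 : 'M[Rg]_(r1, n)) (H2 : 'M[Rg]_(r2, n))
  (hG1 : is_generator_matrix G1 C1) (hG2 : is_generator_matrix G2 C2)
  (hH1 : is_parity_check_matrix H1 C1) (hH2 : is_parity_check_matrix H2 C2)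
  (hsum : code_sum C1 C2 = setT) :
  DLIP q l C1 C2 <->
  ((Rankq q (H2 *m G1^T)%R = Rminus (Rankq q G1) (INR l) /\
    Rminus (Rankq q G1) (INR l) = Rminus (INR (n * omega)) (Rankq q G2)) \/
   (Rankq q (H1 *m G2^T)%R = Rminus (Rankq q G2) (INR l) /\
    Rminus (Rankq q G2) (INR l) = Rminus (INR (n * omega)) (Rankq q G1))).
Proof.
have q_gt1 : (1 < q)%N.
  have : (1 < q ^ omega)%N.
    by rewrite -hcard; apply/card_gt1P; exists 0%R, 1%R; rewrite eq_sym oner_neq0.
  case: q {hq hcard} => [|[|q]] //; rewrite ?exp1n //.
  by case: omega => [|o]; rewrite ?expn0 ?exp0n.
have RnE : (#|Rg| ^ n)%N = (q ^ (n * omega))%N by rewrite hcard -expnM mulnC.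
have card_gt0 (X : {set 'rV[Rg]_n}) : 0%R \in X -> (0 < #|X|)%N.
  by move=> X0; apply/card_gt0P; exists 0%R.
have [C10 _ _] := hC1; have [C20 _ _] := hC2.
have cardI_gt0 : (0 < #|C1 :&: C2|)%N by rewrite card_gt0 // inE C10 C20.
have qn_gt0 : (0 < q ^ (n * omega))%N by rewrite expn_gt0 ltnW.
have cardI : (#|C1| * #|C2| = q ^ (n * omega) * #|C1 :&: C2|)%N.
  by rewrite card_code_sum // hsum cardsT card_mx mul1n RnE.
have cardC1 : (#|C1| * #|dual_code C1| = q ^ (n * omega))%N.
  by rewrite -RnE -hG1 (card_rowspan_mul_dual hloc hfrob).
have cardC2 : (#|C2| * #|dual_code C2| = q ^ (n * omega))%N.
  by rewrite -RnE -hG2 (card_rowspan_mul_dual hloc hfrob).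
have dual12 := dual_code_sum_setT hsum.
have rank21 : #|rowspan (H2 *m G1^T)%R| = #|dual_code C2|.
  by apply: card_rowspan_mul_tr hH2 _; rewrite hG1.
have rank12 : #|rowspan (H1 *m G2^T)%R| = #|dual_code C1|.
  by apply: card_rowspan_mul_tr hH1 _; rewrite hG2 setIC.
rewrite /DLIP /Rankq !dimqE rank21 rank12 hG1 hG2.
apply: dlip_rank_iff.
- by rewrite -logqM ?card_gt0 // cardI logqM // logqX.
- by rewrite -logqM ?card_gt0 ?dual_code0 // cardC1 logqX.
- by rewrite -logqM ?card_gt0 ?dual_code0 // cardC2 logqX.
Qed.
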